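(* Let $X$ be a quasi-geodesic metric space and let $G\curvearrowright X$ be a cobounded quasi-action with coarse stabiliser $H$. Then: (1) $G$ is finitely generated relative to $H$; (2) $H$ is a commensurated subgroup of $G$; (3) the quasi-action $G\curvearrowright X$ is quasi-conjugate to the natural left action of $G$ on $G/H$ (equipped with the relative word metric with respect to a finite relative generating set); in particular $G/H$ is quasi-isometric to $X$.
   Context: Quasi-action, cobounded, quasi-geodesic: a $(K,A)$-quasi-action assigns to each $g\in G$ a $(K,A)$-quasi-isometry $x\mapsto g\cdot x$ with $d(h\cdot(g\cdot x),hg\cdot x)\le A$ and $d(e\cdot x,x)\le A$; cobounded means some $r$ has: for all $x,y$ there is $g$ with $d(g\cdot x,y)\le r$. $T\subseteq G$ is bounded if $\{t\cdot x_0:t\in T\}$ is bounded. A coarse stabiliser is a bounded subgroup $H$ such that every bounded subset of $G$ lies in finitely many left $H$-cosets. $G$ is finitely generated relative to $H$ if there is a finite $S\subseteq G$ with $S\cup H$ generating $G$. For such $S$, the relative word metric on $G/H$ is the path metric of the graph with vertices the left cosets $gH$ and edges $(gH,gsH)$ for $g\in G$, $s\in S$. $H$ is commensurated if $gHg^{-1}\cap H$ has finite index in both $H$ and $gHg^{-1}$ for all $g$. Quasi-actions $G\curvearrowright X$, $G\curvearrowright Y$ are quasi-conjugate if there is a quasi-isometry $f:X\to Y$ with $\sup_{g,x}d(g\cdot f(x),f(g\cdot x))<\infty$. *)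

From HB Require Import structures.
From mathcomp Require Import all_boot all_order all_algebra.
From mathcomp Require Import all_classical all_reals.
From Stdlib Require Import List.

Set Implicit Arguments.
Unset Strict Implicit.
Unset Printing Implicit Defensive.

Import Order.TTheory GRing.Theory Num.Theory.
Local Open Scope ring_scope.
Local Open Scope classical_set_scope.

Section Defs.
Variable R : realType.

Definition is_group {G : Type} (mul : G -> G -> G) (e : G) (inv : G -> G) :=
  [/\ (forall a b c, mul a (mul b c) = mul (mul a b) c),
      (forall a, mul e a = a), (forall a, mul a e = a),
      (forall a, mul (inv a) a = e) & (forall a, mul a (inv a) = e)].

Definition is_subgroup {G : Type} (mul : G -> G -> G) (e : G) (inv : G -> G)
  (H : G -> Prop) :=
  [/\ H e, (forall a b, H a -> H b -> H (mul a b)) & (forall a, H a -> H (inv a))].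

Inductive gen {G : Type} (mul : G -> G -> G) (e : G) (inv : G -> G)
  (P : G -> Prop) : G -> Prop :=
| gen_base a : P a -> gen mul e inv P a
| gen_one : gen mul e inv P e
| gen_mul a b : gen mul e inv P a -> gen mul e inv P b -> gen mul e inv P (mul a b)
| gen_inv a : gen mul e inv P a -> gen mul e inv P (inv a).

Definition rel_gen_set {G : Type} (mul : G -> G -> G) (e : G) (inv : G -> G)
  (H : G -> Prop) (S : list G) :=
  forall g, gen mul e inv (fun x => List.In x S \/ H x) g.

Definition rel_fin_gen {G : Type} (mul : G -> G -> G) (e : G) (inv : G -> G)
  (H : G -> Prop) := exists S : list G, rel_gen_set mul e inv H S.

Definition finite_index {G : Type} (mul : G -> G -> G) (inv : G -> G)
  (K L : G -> Prop) :=
  exists cs : list G, forall l, L l -> exists c, List.In c cs /\ K (mul (inv c) l).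

Definition conjset {G : Type} (mul : G -> G -> G) (inv : G -> G)
  (H : G -> Prop) (g : G) : G -> Prop := fun x => H (mul (mul (inv g) x) g).

Definition commensurated {G : Type} (mul : G -> G -> G) (inv : G -> G)
  (H : G -> Prop) :=
  forall g, finite_index mul inv (fun x => conjset mul inv H g x /\ H x) H /\
            finite_index mul inv (fun x => conjset mul inv H g x /\ H x)
                                 (conjset mul inv H g).

Definition is_metric {X : Type} (d : X -> X -> R) :=
  [/\ (forall x y, 0 <= d x y), (forall x, d x x = 0),
      (forall x y, d x y = 0 -> x = y), (forall x y, d x y = d y x)
    & (forall x y z, d x z <= d x y + d y z)].

Definition is_qi {X Y : Type} (dX : X -> X -> R) (dY : Y -> Y -> R) (f : X -> Y)
  (K A : R) :=
  [/\ 1 <= K, 0 <= A,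
      (forall x x', dX x x' / K - A <= dY (f x) (f x')),
      (forall x x', dY (f x) (f x') <= K * dX x x' + A)
    & (forall y, exists x, dY (f x) y <= A)].

Definition quasi_geodesic {X : Type} (d : X -> X -> R) :=
  exists K A : R, 1 <= K /\ 0 <= A /\
  forall x y, exists (L : R) (c : R -> X), 0 <= L /\ c 0 = x /\ c L = y /\
    forall s t, 0 <= s <= L -> 0 <= t <= L ->
      `|s - t| / K - A <= d (c s) (c t) /\ d (c s) (c t) <= K * `|s - t| + A.

Definition quasi_action {G X : Type} (mul : G -> G -> G) (e : G)
  (d : X -> X -> R) (act : G -> X -> X) :=
  exists K A : R,
  [/\ (forall g, is_qi d d (act g) K A),
      (forall g h x, d (act h (act g x)) (act (mul h g) x) <= A)
    & (forall x, d (act e x) x <= A)].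

Definition cobounded {G X : Type} (d : X -> X -> R) (act : G -> X -> X) :=
  exists r : R, forall x y, exists g, d (act g x) y <= r.

Definition bounded_in {G X : Type} (d : X -> X -> R) (act : G -> X -> X)
  (T : G -> Prop) :=
  exists (x0 : X) (r : R), forall t, T t -> d (act t x0) x0 <= r.

Definition coarse_stabiliser {G X : Type} (mul : G -> G -> G) (e : G)
  (inv : G -> G) (d : X -> X -> R) (act : G -> X -> X) (H : G -> Prop) :=
  [/\ is_subgroup mul e inv H, bounded_in d act H &
      forall T : G -> Prop, bounded_in d act T ->
        exists gs : list G, forall t, T t ->
          exists g, List.In g gs /\ H (mul (inv g) t)].

Definition same_coset {G : Type} (mul : G -> G -> G) (inv : G -> G)
  (H : G -> Prop) (a b : G) := H (mul (inv a) b).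

Definition rel_edge {G : Type} (mul : G -> G -> G) (inv : G -> G)
  (H : G -> Prop) (S : list G) (a b : G) :=
  exists g s, List.In s S /\
    ((same_coset mul inv H a g /\ same_coset mul inv H b (mul g s)) \/
     (same_coset mul inv H b g /\ same_coset mul inv H a (mul g s))).

Fixpoint rel_path {G : Type} (mul : G -> G -> G) (inv : G -> G)
  (H : G -> Prop) (S : list G) (n : nat) (a b : G) : Prop :=
  match n with
  | 0%N => same_coset mul inv H a b
  | n'.+1 => exists c, rel_path mul inv H S n' a c /\ rel_edge mul inv H S c b
  end.

(* path metric d_S(aH, bH), viewed as a pseudometric on G *)
Definition rel_word_dist {G : Type} (mul : G -> G -> G) (inv : G -> G)
  (H : G -> Prop) (S : list G) (a b : G) : R :=
  inf [set (n%:R : R) | n in [set n : nat | rel_path mul inv H S n a b]].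

Definition quasi_conj_to_cosets {G X : Type} (mul : G -> G -> G) (inv : G -> G)
  (d : X -> X -> R) (act : G -> X -> X) (H : G -> Prop) (S : list G) :=
  exists (f : X -> G) (K A : R),
    is_qi d (rel_word_dist mul inv H S) f K A /\
    exists C : R, forall g x,
      rel_word_dist mul inv H S (mul g (f x)) (f (act g x)) <= C.

End Defs.

From HB Require Import structures.
From mathcomp Require Import all_boot all_order all_algebra.
From mathcomp Require Import all_classical all_reals.
From mathcomp Require Import lra.
From Stdlib Require Import List Classical.

(* Fix a basepoint x0 and, by coboundedness, a map f with f(x) x0 close to x.
   Because H is a coarse stabiliser, g^-1 g' ranges over finitely many cosets
   s H whenever g x0 and g' x0 are B-close.  Following a quasi-geodesic between
   orbit points by nearby orbit points thus writes every g as a word in finitely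
   many such s and elements of H, and bounds the relative word distance between
   g H and g' H linearly in d(g x0, g' x0); conversely each edge of the coset
   graph moves the orbit point a bounded amount.  So x |-> f(x) H is a
   quasi-isometry, and it is coarsely equivariant.  For commensurability, the
   bounded set H g lies in finitely many cosets g_i H, and two elements h g and
   h' g of the same g_i H have h^-1 h' in H and in g H g^-1. *)

Set Implicit Arguments.
Unset Strict Implicit.
Unset Printing Implicit Defensive.
Import Order.TTheory GRing.Theory Num.Theory.
Local Open Scope ring_scope.

Lemma list_choice (A B : Type) (P : A -> B -> Prop) (l : list A) :
  exists bs : list B, forall a, List.In a l -> (exists b, P a b) ->
    exists b, List.In b bs /\ P a b.
Proof.
elim: l => [|a l [bs hbs]]; first by exists nil.
case: (classic (exists b, P a b)) => [[b hb]|hn].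
  exists (b :: bs) => a' /= [<-|ha'] hex; first by exists b; split; [left|].
  by have [b' [hb' hPb']] := hbs _ ha' hex; exists b'; split; [right|].
exists bs => a' /= [<-|ha'] hex; first by case: (hn hex).
exact: hbs.
Qed.

Lemma list_nat_bounded (A : Type) (P : A -> nat -> Prop) (l : list A) :
  (forall a, List.In a l -> exists n, P a n) ->
  exists N, forall a, List.In a l -> exists n, (n <= N)%N /\ P a n.
Proof.
elim: l => [|a l IH] hl; first by exists 0%N.
have [m hm] := hl a (or_introl erefl).
have [N hN] := IH (fun a' ha' => hl a' (or_intror ha')).
exists (maxn m N) => a' /= [<-|ha']; first by exists m; rewrite leq_maxl.
have [n [hn hPn]] := hN _ ha'; exists n; split => //.
by apply: leq_trans hn _; rewrite leq_maxr.
Qed.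

Lemma list_real_bounded (R : realType) (A : Type) (u : A -> R) (l : list A) :
  exists M, 0 <= M /\ forall a, List.In a l -> u a <= M.
Proof.
elim: l => [|a l [M [hM hl]]]; first by exists 0.
exists (`|u a| + M); split => [|a' /= [<-|ha']].
- by rewrite addr_ge0.
- by rewrite ler_wpDr // ler_norm.
- by rewrite (le_trans (hl _ ha')) // lerDr.
Qed.

Lemma is_qi_of_bounds (R : realType) (X Y : Type) (dX : X -> X -> R)
    (dY : Y -> Y -> R) (f : X -> Y) (L : R) :
  1 <= L ->
  (forall x x', dX x x' <= L * dY (f x) (f x') + L) ->
  (forall x x', dY (f x) (f x') <= L * dX x x' + L) ->
  (forall y, exists x, dY (f x) y <= L) ->
  is_qi dX dY f L L.
Proof.
move=> hL hlow hup hsurj; split => //; first lra.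
move=> x x'; have hL0 : 0 < L by lra.
rewrite lerBlDr ler_pdivrMr // mulrDl.
have := hlow x x'; have : L <= L * L by rewrite ler_pMr.
lra.
Qed.

Lemma ler_affine (R : realType) (L L' t : R) :
  0 <= t -> L <= L' -> L * t + L <= L' * t + L'.
Proof. by move=> ht hL; apply: lerD => //; rewrite ler_wpM2r. Qed.

Lemma quasi_geodesic_chain (R : realType) (X : Type) (d : X -> X -> R) :
  quasi_geodesic d ->
  exists K' A' : R, 0 <= K' /\ 0 <= A' /\
    forall x y, exists (n : nat) (p : nat -> X),
      n.+1%:R <= K' * (d x y + A') + 1 /\ p 0%N = x /\ p n.+1 = y /\
      forall j, d (p j) (p j.+1) <= K' + A'.
Proof.
case=> K' [A' [hK [hA hq]]]; exists K', A'; split; first lra; split => // x y.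
have [L [c [hL [c0 [cL hc]]]]] := hq x y.
pose t (j : nat) := if j%:R <= L then j%:R else L.
have ht j : 0 <= t j <= L.
  by rewrite /t; case: ifP => h; rewrite ?h ?ler0n ?hL ?lexx.
have hstep j : `|t j - t j.+1| <= 1.
  rewrite ler_norml /t -natr1.
  case: ifP => h1; case: ifP => h2; try (move/negbT: h1; rewrite -ltNge => h1);
    try (move/negbT: h2; rewrite -ltNge => h2); lra.
exists (Num.truncn L), (fun j => c (t j)); split; last split; last split.
- have hlow := hc 0 L; rewrite lexx hL in hlow.
  have {hlow} [hlow _] := hlow isT (lexx L).
  rewrite c0 cL sub0r normrN ger0_norm // in hlow.
  have hLd : L <= K' * (d x y + A') by rewrite mulrC -ler_pdivrMr; lra.
  have := truncn_le L; rewrite -natr1; lra.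
- by rewrite /t mulr0n hL c0.
- rewrite /t; case: ifP => [h|_]; last exact: cL.
  by exfalso; have := truncnS_gt L; lra.
- move=> j; have [_ h] := hc (t j) (t j.+1) (ht j) (ht j.+1).
  have : K' * `|t j - t j.+1| <= K' * 1 by rewrite ler_wpM2l //; lra.
  lra.
Qed.

Section Group.
Variables (G : Type) (mul : G -> G -> G) (e : G) (inv : G -> G).
Hypothesis HG : is_group mul e inv.

Lemma mulgA a b c : mul a (mul b c) = mul (mul a b) c.
Proof. by case: HG. Qed.
Lemma mul1g a : mul e a = a. Proof. by case: HG. Qed.
Lemma mulg1 a : mul a e = a. Proof. by case: HG. Qed.
Lemma mulVg a : mul (inv a) a = e. Proof. by case: HG. Qed.
Lemma mulgV a : mul a (inv a) = e. Proof. by case: HG. Qed.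
Lemma mulKVg a b : mul a (mul (inv a) b) = b.
Proof. by rewrite mulgA mulgV mul1g. Qed.
Lemma mulKg a b : mul (inv a) (mul a b) = b.
Proof. by rewrite mulgA mulVg mul1g. Qed.
Lemma invg_unique a b : mul a b = e -> b = inv a.
Proof. by move=> h; rewrite -(mulKg a b) h mulg1. Qed.
Lemma invgK a : inv (inv a) = a.
Proof. by symmetry; apply: invg_unique; rewrite mulVg. Qed.
Lemma invMg a b : inv (mul a b) = mul (inv b) (inv a).
Proof. by symmetry; apply: invg_unique; rewrite -mulgA mulKVg mulgV. Qed.
Lemma invg1 : inv e = e.
Proof. by rewrite -[RHS](mulVg e) mulg1. Qed.

Ltac gsimpl := rewrite ?invMg ?invgK ?invg1 -?mulgA
  ?mulKVg ?mulKg ?mulVg ?mulgV ?mul1g ?mulg1.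

Section Cosets.
Variable H : G -> Prop.
Hypothesis HH : is_subgroup mul e inv H.

Lemma subgroup1 : H e. Proof. by case: HH. Qed.
Lemma subgroupM a b : H a -> H b -> H (mul a b).
Proof. by case: HH => _ hM _; apply: hM. Qed.
Lemma subgroupV a : H a -> H (inv a).
Proof. by case: HH => _ _ hV; apply: hV. Qed.

Notation same_coset := (same_coset mul inv H).

Lemma same_coset_refl a : same_coset a a.
Proof. by rewrite /same_coset mulVg; exact: subgroup1. Qed.
Lemma same_coset_sym a b : same_coset a b -> same_coset b a.
Proof. by rewrite /same_coset => /subgroupV; gsimpl. Qed.
Lemma same_coset_trans a b c :
  same_coset a b -> same_coset b c -> same_coset a c.
Proof.
by rewrite /same_coset => hab hbc; have := subgroupM hab hbc; gsimpl.
Qed.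
Lemma same_coset_mull c a b :
  same_coset a b -> same_coset (mul c a) (mul c b).
Proof. by rewrite /same_coset; gsimpl. Qed.

Variable S : list G.
Notation rel_edge := (rel_edge mul inv H S).
Notation rel_path := (rel_path mul inv H S).

Lemma rel_edge_sym a b : rel_edge a b -> rel_edge b a.
Proof. by case=> g [s [hs [h|h]]]; exists g, s; split => //; [right|left]. Qed.
Lemma rel_edge_coset a b b' : rel_edge a b -> same_coset b b' -> rel_edge a b'.
Proof.
case=> g [s [hs [[h1 h2]|[h1 h2]]]] hb; exists g, s; split => //.
  by left; split => //; apply: same_coset_trans (same_coset_sym hb) h2.
by right; split => //; apply: same_coset_trans (same_coset_sym hb) h1.
Qed.
Lemma rel_edge_mull c a b : rel_edge a b -> rel_edge (mul c a) (mul c b).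
Proof.
case=> g [s [hs [[h1 h2]|[h1 h2]]]]; exists (mul c g), s; split => //.
  by left; rewrite -mulgA; split; apply: same_coset_mull.
by right; rewrite -mulgA; split; apply: same_coset_mull.
Qed.

Lemma rel_path_coset n a b b' :
  rel_path n a b -> same_coset b b' -> rel_path n a b'.
Proof.
case: n => [|n] /=; first exact: same_coset_trans.
by case=> c [h1 h2] hb; exists c; split => //; apply: rel_edge_coset hb.
Qed.
Lemma rel_path_cat m n a b c :
  rel_path m a b -> rel_path n b c -> rel_path (m + n) a c.
Proof.
elim: n c => [|n IH] c hab /=; first by rewrite addn0; apply: rel_path_coset.
by case=> c' [h1 h2]; rewrite addnS; exists c'; split => //; apply: IH.
Qed.
Lemma rel_path_mull n c a b : rel_path n a b -> rel_path n (mul c a) (mul c b).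
Proof.
elim: n b => [|n IH] b /=; first exact: same_coset_mull.
case=> c' [h1 h2]; exists (mul c c').
by split; [apply: IH|apply: rel_edge_mull].
Qed.
Lemma rel_path1 a b : rel_edge a b -> rel_path 1 a b.
Proof. by exists a; split => //; exact: same_coset_refl. Qed.
Lemma rel_path_sym n a b : rel_path n a b -> rel_path n b a.
Proof.
elim: n b => [|n IH] b /=; first exact: same_coset_sym.
case=> c [h1 h2].
by have := rel_path_cat (rel_path1 (rel_edge_sym h2)) (IH _ h1); rewrite add1n.
Qed.

Lemma rel_path_of_gen g : gen mul e inv (fun x => List.In x S \/ H x) g ->
  exists n, rel_path n e g.
Proof.
elim=> {g} [a [hS|hH]||a b _ [m hm] _ [n hn]|a _ [n hn]].
- exists 1%N; apply: rel_path1; exists e, a; split => //; left.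
  by rewrite mul1g; split; apply: same_coset_refl.
- by exists 0%N; rewrite /= /same_coset invg1 mul1g.
- by exists 0%N; exact: same_coset_refl.
- exists (m + n)%N; apply: rel_path_cat hm _.
  by have := rel_path_mull a hn; rewrite mulg1.
- exists n; apply: rel_path_sym.
  by have := rel_path_mull (inv a) hn; rewrite mulg1 mulVg.
Qed.

Lemma rel_path_chain (N : nat) (q : nat -> G) :
  (forall j, exists k, (k <= N)%N /\ rel_path k (q j) (q j.+1)) ->
  forall j, exists m, (m <= j * N)%N /\ rel_path m (q 0%N) (q j).
Proof.
move=> hq; elim=> [|j [m [hm hpm]]].
  by exists 0%N; split => //; exact: same_coset_refl.
have [k [hk hpk]] := hq j; exists (m + k)%N.
split; last exact: rel_path_cat hpk.
by rewrite mulSn addnC leq_add.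
Qed.

Section RelWordDist.
Variable R : realType.
Notation rel_word_dist := (rel_word_dist R mul inv H S).

Lemma rel_word_dist_le_path n a b : rel_path n a b -> rel_word_dist a b <= n%:R.
Proof.
move=> hp; apply: ge_inf; last by exists n.
by exists 0 => _ [m _ <-].
Qed.

Lemma rel_word_dist_ge (x : R) a b : (exists n, rel_path n a b) ->
  (forall n, rel_path n a b -> x <= n%:R) -> x <= rel_word_dist a b.
Proof.
move=> [n hn] hx; apply: lb_le_inf; first by exists n%:R, n.
by move=> _ [m hm <-]; apply: hx.
Qed.

Lemma rel_word_dist_ge0 a b : (exists n, rel_path n a b) ->
  0 <= rel_word_dist a b.
Proof. by move=> hp; apply: rel_word_dist_ge => // n _. Qed.

Lemma rel_word_dist_affine_ge (u L : R) a b : 0 < L ->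
  (exists n, rel_path n a b) ->
  (forall n, rel_path n a b -> u <= L * n%:R + L) ->
  u <= L * rel_word_dist a b + L.
Proof.
move=> hL hp hu; rewrite -lerBlDr mulrC -ler_pdivrMr //.
by apply: rel_word_dist_ge => // n /hu; rewrite ler_pdivrMr // lerBlDr mulrC.
Qed.

End RelWordDist.
End Cosets.

Lemma gen_rel_step (H : G -> Prop) (S : list G) a b s :
  gen mul e inv (fun x => List.In x S \/ H x) a -> List.In s S ->
  H (mul (inv s) (mul (inv a) b)) ->
  gen mul e inv (fun x => List.In x S \/ H x) b.
Proof.
move=> ha hs hH.
have -> : b = mul a (mul s (mul (inv s) (mul (inv a) b))) by rewrite !mulKVg.
by apply: gen_mul => //; apply: gen_mul; apply: gen_base; [left|right].
Qed.

Section QuasiAction.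
Variables (R : realType) (X : Type) (d : X -> X -> R) (act : G -> X -> X).
Variables (K A : R).
Hypothesis Hd : is_metric d.
Hypothesis Hqi : forall g, is_qi d d (act g) K A.
Hypothesis Hcomp : forall g h x, d (act h (act g x)) (act (mul h g) x) <= A.
Hypothesis Hid : forall x, d (act e x) x <= A.

Lemma dist_ge0 x y : 0 <= d x y. Proof. by case: Hd. Qed.
Lemma dist_xx x : d x x = 0. Proof. by case: Hd. Qed.
Lemma dist_sym x y : d x y = d y x. Proof. by case: Hd. Qed.
Lemma dist_triangle x y z : d x z <= d x y + d y z.
Proof. by case: Hd => _ _ _ _; apply. Qed.

Lemma qa_K_ge1 : 1 <= K. Proof. by case: (Hqi e). Qed.
Lemma qa_A_ge0 : 0 <= A. Proof. by case: (Hqi e). Qed.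
Lemma act_dist_le g x y : d (act g x) (act g y) <= K * d x y + A.
Proof. by case: (Hqi g). Qed.
Lemma mulK_dist_le x y B : d x y <= B -> K * d x y <= K * B.
Proof. by move=> h; rewrite ler_wpM2l //; have := qa_K_ge1; lra. Qed.

Variables (H : G -> Prop) (x0 : X) (r0 : R).
Hypothesis HH : is_subgroup mul e inv H.
Hypothesis Hbd : forall h, H h -> d (act h x0) x0 <= r0.
Hypothesis Hcov : forall T : G -> Prop, bounded_in d act T ->
  exists gs : list G, forall t, T t ->
    exists g, List.In g gs /\ H (mul (inv g) t).

Lemma orbit_dist_le a b :
  d (act a x0) (act b x0) <= K * d x0 (act (mul (inv a) b) x0) + 2 * A.
Proof.
have := dist_triangle (act a x0) (act a (act (mul (inv a) b) x0)) (act b x0).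
have := act_dist_le a x0 (act (mul (inv a) b) x0).
have := Hcomp (mul (inv a) b) a x0; rewrite mulKVg.
lra.
Qed.

Lemma orbit_dist_invM_le a b :
  d (act (mul (inv a) b) x0) x0 <= K * d (act a x0) (act b x0) + 4 * A.
Proof.
have := dist_triangle (act (mul (inv a) b) x0) (act (inv a) (act b x0)) x0.
have := dist_triangle (act (inv a) (act b x0)) (act (inv a) (act a x0)) x0.
have := dist_triangle (act (inv a) (act a x0)) (act e x0) x0.
have := Hcomp b (inv a) x0; rewrite dist_sym.
have := Hcomp a (inv a) x0; rewrite mulVg.
have := act_dist_le (inv a) (act b x0) (act a x0).
rewrite (dist_sym (act b x0)).
have := Hid x0.
lra.
Qed.

Lemma orbit_close_cosets B : exists gs, forall a b,
  d (act a x0) (act b x0) <= B ->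
  exists g, List.In g gs /\ H (mul (inv g) (mul (inv a) b)).
Proof.
have hT : bounded_in d act (fun t => d (act t x0) x0 <= K * B + 4 * A).
  by exists x0, (K * B + 4 * A).
have [gs hgs] := Hcov hT; exists gs => a b hab; apply: hgs.
by have := orbit_dist_invM_le a b; have := mulK_dist_le hab; lra.
Qed.

Lemma orbit_dist_same_coset a b : same_coset mul inv H a b ->
  d (act a x0) (act b x0) <= K * r0 + 2 * A.
Proof.
move=> /Hbd; rewrite dist_sym => /mulK_dist_le.
by have := orbit_dist_le a b; lra.
Qed.

Lemma orbit_coset_radius_ge0 : 0 <= K * r0 + 2 * A.
Proof.
have := orbit_dist_same_coset (same_coset_refl HH e).
by have := dist_ge0 (act e x0) (act e x0); lra.
Qed.

Lemma right_coset_bounded g :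
  bounded_in d act (fun t => exists h, H h /\ t = mul h g).
Proof.
exists x0, (A + (K * d (act g x0) x0 + A) + r0) => _ [h [hh ->]].
have := dist_triangle (act (mul h g) x0) (act h (act g x0)) x0.
have := dist_triangle (act h (act g x0)) (act h x0) x0.
have := Hcomp g h x0; rewrite dist_sym.
have := act_dist_le h (act g x0) x0.
have := Hbd hh.
lra.
Qed.

Lemma subgroup_conj_finite_index g :
  finite_index mul inv (fun x => conjset mul inv H g x /\ H x) H.
Proof.
have [gs hgs] := Hcov (right_coset_bounded g).
have [cs hcs] := list_choice (fun gi c => H c /\ H (mul (inv gi) (mul c g))) gs.
exists cs => l hl.
have [gi [hgi hH]] := hgs (mul l g) (ex_intro _ l (conj hl erefl)).
have [c [hc [Hc Hc']]] := hcs gi hgi (ex_intro _ l (conj hl hH)).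
exists c; split => //; split; last exact (subgroupM HH (subgroupV HH Hc) hl).
(* c g and l g lie in the same coset gi H, so g^-1 (c^-1 l) g is in H. *)
rewrite /conjset; have -> : mul (mul (inv g) (mul (inv c) l)) g =
  mul (inv (mul (inv gi) (mul c g))) (mul (inv gi) (mul l g)) by gsimpl.
exact (subgroupM HH (subgroupV HH Hc') hH).
Qed.

Lemma coarse_stabiliser_commensurated : commensurated mul inv H.
Proof.
move=> g; split; first exact: subgroup_conj_finite_index.
(* Conjugate by g the cover of H by cosets of H meeting g^-1 H g. *)
have [cs hcs] := subgroup_conj_finite_index (inv g).
exists (map (fun c => mul g (mul c (inv g))) cs) => l hl.
have [c [hc [h1 h2]]] := hcs _ hl.
exists (mul g (mul c (inv g))); split; first exact: List.in_map.
split.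
  rewrite /conjset.
  have -> : mul (mul (inv g) (mul (inv (mul g (mul c (inv g)))) l)) g =
    mul (inv c) (mul (mul (inv g) l) g) by gsimpl.
  exact: h2.
have -> : mul (inv (mul g (mul c (inv g)))) l =
    mul (mul (inv (inv g)) (mul (inv c) (mul (mul (inv g) l) g))) (inv g).
  by gsimpl.
exact: h1.
Qed.

Variables (rc : R) (f : X -> G).
Hypothesis Hf : forall x, d (act (f x) x0) x <= rc.
Variables (K' A' : R).
Hypotheses (HK' : 0 <= K') (HA' : 0 <= A').
Hypothesis Hchain : forall x y, exists (n : nat) (p : nat -> X),
  n.+1%:R <= K' * (d x y + A') + 1 /\ p 0%N = x /\ p n.+1 = y /\
  forall j, d (p j) (p j.+1) <= K' + A'.

Lemma rc_ge0 : 0 <= rc.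
Proof. by have := Hf x0; have := dist_ge0 (act (f x0) x0) x0; lra. Qed.

Lemma orbit_chain a b : exists (n : nat) (q : nat -> G),
  n%:R <= K' * (d (act a x0) (act b x0) + A') + 1 /\ q 0%N = a /\ q n = b /\
  forall j, d (act (q j) x0) (act (q j.+1) x0) <= 2 * rc + (K' + A').
Proof.
have [n [p [hn [p0 [pn hp]]]]] := Hchain (act a x0) (act b x0).
(* The chain has n.+1 > 0 steps, so its two ends can be replaced by a and b
   independently. *)
pose q j := if j == 0%N then a else if j == n.+1 then b else f (p j).
have hq j : d (act (q j) x0) (p j) <= rc.
  rewrite /q; case: eqP => [->|_]; first by rewrite p0 dist_xx rc_ge0.
  by case: eqP => [->|_]; [rewrite pn dist_xx rc_ge0|exact: Hf].
exists n.+1, q; do 2!split => //; split; first by rewrite /q eqxx.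
move=> j.
have := dist_triangle (act (q j) x0) (p j) (act (q j.+1) x0).
have := dist_triangle (p j) (p j.+1) (act (q j.+1) x0).
have := hq j.+1; rewrite dist_sym; have := hq j; have := hp j.
lra.
Qed.

Lemma coarse_stabiliser_rel_fin_gen : rel_fin_gen mul e inv H.
Proof.
have [gs hgs] := orbit_close_cosets (2 * rc + (K' + A')).
exists gs => g; have [n [q [_ [q0 [<- hq]]]]] := orbit_chain e g.
elim: n => [|j IH]; first by rewrite q0; exact: gen_one.
by have [s [hs hH]] := hgs _ _ (hq j); exact: gen_rel_step IH hs hH.
Qed.

Section RelativeWordMetric.
Variable S : list G.
Hypothesis HS : rel_gen_set mul e inv H S.
Notation rel_path := (rel_path mul inv H S).
Notation rel_word_dist := (rel_word_dist R mul inv H S).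

Lemma rel_path_exists a b : exists n, rel_path n a b.
Proof.
have [n hn] := rel_path_of_gen HH (HS (mul (inv a) b)).
by exists n; have := rel_path_mull a hn; rewrite mulg1 mulKVg.
Qed.

Lemma orbit_close_rel_path B : exists N, forall a b,
  d (act a x0) (act b x0) <= B -> exists n, (n <= N)%N /\ rel_path n a b.
Proof.
have [gs hgs] := orbit_close_cosets B.
have [N hN] := list_nat_bounded (P := fun g n => rel_path n e g) (l := gs)
  (fun g _ => rel_path_exists e g).
exists N => a b hab; have [g [hg hH]] := hgs _ _ hab.
have [n [hn hp]] := hN _ hg; exists n; split => //.
have := rel_path_mull a hp; rewrite mulg1 => hp'.
apply: (rel_path_coset HH hp'); by rewrite /same_coset invMg -mulgA.
Qed.

Lemma orbit_dist_rel_edge_le : exists E, 0 <= E /\ forall a b,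
  rel_edge mul inv H S a b -> d (act a x0) (act b x0) <= E.
Proof.
have [M [hM hMS]] := list_real_bounded (fun s => d x0 (act s x0)) S.
pose E0 := K * r0 + 2 * A.
have hE0 : 0 <= E0 := orbit_coset_radius_ge0.
have hKM : 0 <= K * M by apply: mulr_ge0 => //; have := qa_K_ge1; lra.
exists (E0 + (K * M + 2 * A) + E0); split; first by have := qa_A_ge0; lra.
move=> a b [g [s [hs hc]]].
have hgs : d (act g x0) (act (mul g s) x0) <= K * M + 2 * A.
  have := orbit_dist_le g (mul g s); rewrite mulKg.
  by have := mulK_dist_le (hMS _ hs); lra.
case: hc => [[h1 h2]|[h1 h2]].
  have := orbit_dist_same_coset h1.
  have := orbit_dist_same_coset (same_coset_sym HH h2).
  have := dist_triangle (act a x0) (act g x0) (act b x0).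
  have := dist_triangle (act g x0) (act (mul g s) x0) (act b x0).
  rewrite /E0; lra.
have := orbit_dist_same_coset h2.
have := orbit_dist_same_coset (same_coset_sym HH h1).
have := dist_triangle (act a x0) (act (mul g s) x0) (act b x0).
have := dist_triangle (act (mul g s) x0) (act g x0) (act b x0).
rewrite dist_sym in hgs; rewrite /E0; lra.
Qed.

Lemma orbit_dist_rel_path_le : exists C, 1 <= C /\ forall n a b,
  rel_path n a b -> d (act a x0) (act b x0) <= n%:R * C + C.
Proof.
have [E [hE hedge]] := orbit_dist_rel_edge_le.
have hr := orbit_coset_radius_ge0.
exists (E + (K * r0 + 2 * A) + 1); split; first lra.
elim=> [|n IH] a b /=.
  by move=> /orbit_dist_same_coset; rewrite mul0r add0r; lra.
case=> c [/IH hac /hedge hcb].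
have := dist_triangle (act a x0) (act c x0) (act b x0).
rewrite -natr1; lra.
Qed.

Lemma coarse_map_lower_bound : exists L, 0 < L /\ forall x y,
  d x y <= L * rel_word_dist (f x) (f y) + L.
Proof.
have [C [hC hpath]] := orbit_dist_rel_path_le.
have hrc := rc_ge0.
exists (C + 2 * rc); split; first lra.
move=> x y; apply: rel_word_dist_affine_ge; [lra|exact: rel_path_exists|].
move=> n /hpath hn; have := mulr_ge0 (ler0n R n) hrc.
have := dist_triangle x (act (f x) x0) y.
have := dist_triangle (act (f x) x0) (act (f y) x0) y.
have := Hf x; rewrite dist_sym; have := Hf y.
lra.
Qed.

Lemma coarse_map_upper_bound : exists L, 0 <= L /\ forall x y,
  rel_word_dist (f x) (f y) <= L * d x y + L.
Proof.
have hr : 0 <= 2 * rc + A' := addr_ge0 (mulr_ge0 (ler0n R 2) rc_ge0) HA'.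
have [N hN] := orbit_close_rel_path (2 * rc + (K' + A')).
have hN0 := ler0n R N.
have hNK : 0 <= N%:R * K' := mulr_ge0 hN0 HK'.
have hL2 : 0 <= N%:R * (K' * (2 * rc + A') + 1) :=
  mulr_ge0 hN0 (addr_ge0 (mulr_ge0 HK' hr) ler01).
exists (N%:R * K' + N%:R * (K' * (2 * rc + A') + 1)); split.
  exact: addr_ge0.
move=> x y; have [n [q [hn [q0 [qn hq]]]]] := orbit_chain (f x) (f y).
have [m [hm]] := rel_path_chain HH (fun j => hN _ _ (hq j)) n.
rewrite q0 qn => /rel_word_dist_le_path /le_trans; apply.
have hfxy : d (act (f x) x0) (act (f y) x0) <= 2 * rc + d x y.
  have := dist_triangle (act (f x) x0) x (act (f y) x0).
  have := dist_triangle x y (act (f y) x0).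
  by have := Hf x; have := Hf y; rewrite dist_sym; lra.
have := ler_wpM2r hN0 hn; have := ler_wpM2l hNK hfxy.
have := mulr_ge0 hL2 (dist_ge0 x y).
by move: hm; rewrite -(ler_nat R) natrM; lra.
Qed.

Lemma coarse_map_dense : exists L, 0 <= L /\ forall g,
  rel_word_dist (f (act g x0)) g <= L.
Proof.
have [N hN] := orbit_close_rel_path rc.
exists N%:R; split => // g; have [m [hm hp]] := hN _ _ (Hf (act g x0)).
by apply: le_trans (rel_word_dist_le_path R hp) _; rewrite ler_nat.
Qed.

Lemma coarse_map_equivariant : exists C, forall g x,
  rel_word_dist (mul g (f x)) (f (act g x)) <= C.
Proof.
have [N hN] := orbit_close_rel_path (A + (K * rc + A) + rc).
exists N%:R => g x; have [m [hm hp]] : exists m, (m <= N)%N /\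
    rel_path m (mul g (f x)) (f (act g x)).
  apply: hN.
  have := dist_triangle (act (mul g (f x)) x0) (act g (act (f x) x0))
    (act (f (act g x)) x0).
  have := dist_triangle (act g (act (f x) x0)) (act g x) (act (f (act g x)) x0).
  have := Hcomp (f x) g x0; rewrite dist_sym.
  have := act_dist_le g (act (f x) x0) x; have := mulK_dist_le (Hf x).
  have := Hf (act g x); rewrite dist_sym.
  lra.
by apply: le_trans (rel_word_dist_le_path R hp) _; rewrite ler_nat.
Qed.

Lemma coarse_map_quasi_conj : quasi_conj_to_cosets mul inv d act H S.
Proof.
have [L1 [hL1 hlow]] := coarse_map_lower_bound.
have [L2 [hL2 hup]] := coarse_map_upper_bound.
have [L3 [hL3 hdense]] := coarse_map_dense.
pose L := 1 + L1 + L2 + L3.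
exists f, L, L; split; last exact: coarse_map_equivariant.
apply: is_qi_of_bounds => [|x y|x y|g]; first by rewrite /L; lra.
- have hd := rel_word_dist_ge0 R (rel_path_exists (f x) (f y)).
  by apply: le_trans (hlow x y) (ler_affine hd _); rewrite /L; lra.
- by apply: le_trans (hup x y) (ler_affine (dist_ge0 x y) _); rewrite /L; lra.
- by exists (act g x0); apply: le_trans (hdense g) _; rewrite /L; lra.
Qed.

End RelativeWordMetric.
End QuasiAction.
End Group.

Theorem propositionE (R : realType) (G : Type) (mul : G -> G -> G) (e : G)
  (inv : G -> G) (HG : is_group mul e inv)
  (X : Type) (d : X -> X -> R) (Hd : is_metric d) (Hqg : quasi_geodesic d)
  (act : G -> X -> X) (Hqa : quasi_action mul e d act) (Hcob : cobounded d act)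
  (H : G -> Prop) (HH : coarse_stabiliser mul e inv d act H) :
  rel_fin_gen mul e inv H /\
  commensurated mul inv H /\
  (forall S : list G, rel_gen_set mul e inv H S ->
     quasi_conj_to_cosets mul inv d act H S).
Proof.
have [K [A [Hqi Hcomp Hid]]] := Hqa.
case: HH => HHs [x0 [r0 Hbd]] Hcov.
have [rc Hrc] := Hcob.
have [f Hf] := boolp.choice (fun x => Hrc x0 x).
have [K' [A' [HK' [HA' Hchain]]]] := quasi_geodesic_chain Hqg.
split; [|split].
- exact (coarse_stabiliser_rel_fin_gen HG Hd Hqi Hcomp Hid Hcov Hf Hchain).
- exact (coarse_stabiliser_commensurated HG Hd Hqi Hcomp HHs Hbd Hcov).
- move=> S HS.
  exact (coarse_map_quasi_conj HG Hd Hqi Hcomp Hid HHs Hbd Hcov Hf HK' HA'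
    Hchain HS).
Qed.
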